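(* Consider the two-stage robust problem $\min_{x\in\mathcal X}c_1x+\max_{u\in\mathcal U(x)}\min_{y\in\mathcal Y(x,u)}c_2y$ with decision-dependent uncertainty set $\mathcal U(x)=\{u\in\mathbb R^{n_u}_+: x_{li}\le u_i\le x_{hi},\ i=1,\dots,n_u\}$, where $x_l=(x_{l1},\dots,x_{ln_u})$ and $x_h=(x_{h1},\dots,x_{hn_u})$ are subvectors of the first-stage variables, and $\mathcal U(x)\ne\emptyset$ for all $x\in\mathcal X$. Then it is equivalent to $\min_{x\in\mathcal X}c_1x+\max_{u\in\mathcal U^0}\min_{y\in\mathcal Y'(x,u)}c_2y$, where $\mathcal U^0=[0,1]^{n_u}$ and $\mathcal Y'(x,u)=\{y\in\mathbb Z^{m_y}_+\times\mathbb R^{n_y}_+: B_2y\ge d-B_1x-E(x_l+u\circ(x_h-x_l))\}$.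
   Context: $\mathcal X=\{x\in\mathbb Z^{m_x}_+\times\mathbb R^{n_x}_+: Ax\ge b\}$, $\mathcal Y(x,u)=\{y\in\mathbb Z^{m_y}_+\times\mathbb R^{n_y}_+: B_2y\ge d-B_1x-Eu\}$, $\circ$ is the componentwise product. The optimal value of an infeasible minimization (maximization) problem is $+\infty$ ($-\infty$). Two formulations are called equivalent if they have the same optimal value and any optimal first-stage solution of one is optimal for the other, and vice versa. *)

From HB Require Import structures.
From mathcomp Require Import all_boot all_order all_algebra.
From mathcomp Require Import all_classical all_reals.
From mathcomp Require Import ereal.
Set Implicit Arguments. Unset Strict Implicit. Unset Printing Implicit Defensive.
Import Order.TTheory GRing.Theory Num.Theory.
Local Open Scope classical_set_scope.
Local Open Scope ring_scope.

Definition mixed_nonneg (R : realType) (m n : nat) (v : 'cV[R]_(m + n)) : Prop :=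
  (forall i : 'I_m, v (lshift n i) 0 \is a Num.int) /\ (forall i, 0 <= v i 0).

Definition vge (R : realType) (k : nat) (a b : 'cV[R]_k) : Prop :=
  forall i, b i 0 <= a i 0.

Definition Xset (R : realType) (mx nx p : nat) (A : 'M[R]_(p, mx + nx))
  (b : 'cV[R]_p) : set 'cV[R]_(mx + nx) :=
  [set x | mixed_nonneg x /\ vge (A *m x) b].

Definition Yset (R : realType) (mx nx my ny nu q : nat)
  (B1 : 'M[R]_(q, mx + nx)) (B2 : 'M[R]_(q, my + ny)) (E : 'M[R]_(q, nu))
  (d : 'cV[R]_q) (x : 'cV[R]_(mx + nx)) (w : 'cV[R]_nu) : set 'cV[R]_(my + ny) :=
  [set y | mixed_nonneg y /\ vge (B2 *m y) (d - B1 *m x - E *m w)].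

Definition subvec (R : realType) (N nu : nat) (s : 'I_nu -> 'I_N)
  (x : 'cV[R]_N) : 'cV[R]_nu := \col_i x (s i) 0.

Definition Uset (R : realType) (N nu : nat) (l h : 'I_nu -> 'I_N)
  (x : 'cV[R]_N) : set 'cV[R]_nu :=
  [set u | forall i, 0 <= u i 0 /\ subvec l x i 0 <= u i 0 /\ u i 0 <= subvec h x i 0].

Definition U0 (R : realType) (nu : nat) : set 'cV[R]_nu :=
  [set u | forall i, 0 <= u i 0 /\ u i 0 <= 1].

Definition cprod (R : realType) (k : nat) (a b : 'cV[R]_k) : 'cV[R]_k :=
  \col_i (a i 0 * b i 0).

(* optimal value of min_{y in Y} c y  (+oo if Y is empty) *)
Definition minval (R : realType) (n : nat) (c : 'rV[R]_n) (Y : set 'cV[R]_n) : \bar R :=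
  ereal_inf [set ((c *m y) 0 0)%:E | y in Y].

Definition two_stage_obj (R : realType) (N nu n : nat) (c1 : 'rV[R]_N) (c2 : 'rV[R]_n)
  (U : 'cV[R]_N -> set 'cV[R]_nu) (Y : 'cV[R]_N -> 'cV[R]_nu -> set 'cV[R]_n)
  (x : 'cV[R]_N) : \bar R :=
  ((c1 *m x) 0 0)%:E + ereal_sup [set minval c2 (Y x u) | u in U x].

(* optimal value of min_{x in X} f x  (+oo if X is empty) *)
Definition optval (R : realType) (N : nat) (X : set 'cV[R]_N) (f : 'cV[R]_N -> \bar R)
  : \bar R := ereal_inf (f @` X).

Definition is_optimal (R : realType) (N : nat) (X : set 'cV[R]_N)
  (f : 'cV[R]_N -> \bar R) (x : 'cV[R]_N) : Prop :=
  X x /\ f x = optval X f.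

From HB Require Import structures.
From mathcomp Require Import all_boot all_order all_algebra.
From mathcomp Require Import all_classical all_reals.
From mathcomp Require Import ereal.
Set Implicit Arguments. Unset Strict Implicit. Unset Printing Implicit Defensive.
Import Order.TTheory GRing.Theory Num.Theory.
Local Open Scope classical_set_scope.
Local Open Scope ring_scope.

(* For fixed x with x_l <= x_h, the affine map u |-> x_l + u o (x_h - x_l)
   sends the unit box U^0 onto the box U(x), so both formulations take the
   supremum over the same family of second-stage problems. Hence the two
   first-stage objectives agree on X, and equal objectives have the same
   optimal value and the same minimizers. *)

Section AffineInterval.
Variable R : realFieldType.

Lemma affine_in_itv (a b t : R) :
  a <= b -> 0 <= t <= 1 -> a <= a + t * (b - a) <= b.
Proof.
move=> le_ab /andP[t_ge0 t_le1]; have ba_ge0 : 0 <= b - a by rewrite subr_ge0.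
rewrite lerDl mulr_ge0 //= -lerBrDl.
by rewrite -[leRHS]mul1r ler_wpM2r.
Qed.

Lemma affine_itv_surj (a b w : R) :
  a <= w <= b -> exists2 t, 0 <= t <= 1 & w = a + t * (b - a).
Proof.
move=> /andP[le_aw le_wb]; have [lt_ab | ge_ab] := ltP a b.
  have ba_gt0 : 0 < b - a by rewrite subr_gt0.
  exists ((w - a) / (b - a)); last by rewrite divfK ?gt_eqF // subrKC.
  rewrite divr_ge0 ?subr_ge0 ?(ltW lt_ab) //=.
  by rewrite ler_pdivrMr // mul1r lerD2r.
exists 0; first by rewrite lexx ler01.
by rewrite mul0r addr0; apply/eqP; rewrite eq_le le_aw (le_trans le_wb).
Qed.

End AffineInterval.

Section DecisionDependentBox.
Variables (R : realType) (N nu : nat) (l h : 'I_nu -> 'I_N).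

Definition box_param (x : 'cV[R]_N) (u : 'cV[R]_nu) : 'cV[R]_nu :=
  subvec l x + cprod u (subvec h x - subvec l x).

Lemma Uset_neq0_le (x : 'cV[R]_N) i :
  Uset l h x !=set0 -> x (l i) 0 <= x (h i) 0.
Proof.
by move=> [u /(_ i)[_]]; rewrite /subvec !mxE => -[/le_trans]; apply.
Qed.

Lemma box_param_image (x : 'cV[R]_N) :
  (forall i, 0 <= x i 0) -> Uset l h x !=set0 ->
  box_param x @` @U0 R nu = Uset l h x.
Proof.
move=> x_ge0 /Uset_neq0_le lh; rewrite eqEsubset; split.
  move=> _ [u u01 <-] i; rewrite /box_param /subvec /cprod !mxE.
  have /andP[le_l le_h] := affine_in_itv (lh i) (introT andP (u01 i)).
  by rewrite (le_trans (x_ge0 _) le_l) le_l le_h.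
move=> w Uw.
have /choice[t t01] : forall i, exists t : R,
    0 <= t <= 1 /\ w i 0 = x (l i) 0 + t * (x (h i) 0 - x (l i) 0).
  move=> i; have [_] := Uw i; rewrite /subvec !mxE => -[le_l le_h].
  by have [t ? ?] := affine_itv_surj (introT andP (conj le_l le_h)); exists t.
exists (\col_i t i).
  by move=> i; rewrite mxE; have [/andP[]] := t01 i.
apply/matrixP => i j; rewrite (ord1 j) /box_param /subvec /cprod !mxE.
by have [_ ->] := t01 i.
Qed.

End DecisionDependentBox.

Section EquivalentFormulations.
Variables (R : realType) (N : nat) (X : set 'cV[R]_N) (f g : 'cV[R]_N -> \bar R).
Hypothesis fg : forall x, X x -> f x = g x.

Lemma eq_optval : optval X f = optval X g.
Proof. by rewrite /optval (eq_imagel fg). Qed.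

Lemma eq_is_optimal x : is_optimal X f x <-> is_optimal X g x.
Proof.
by rewrite /is_optimal -eq_optval; split=> -[Xx <-]; split; rewrite ?fg.
Qed.

End EquivalentFormulations.

Theorem proposition4 (R : realType) (mx nx my ny nu p q : nat)
  (A : 'M[R]_(p, mx + nx)) (b : 'cV[R]_p)
  (B1 : 'M[R]_(q, mx + nx)) (B2 : 'M[R]_(q, my + ny)) (E : 'M[R]_(q, nu))
  (d : 'cV[R]_q) (c1 : 'rV[R]_(mx + nx)) (c2 : 'rV[R]_(my + ny))
  (l h : 'I_nu -> 'I_(mx + nx)) :
  (forall x, Xset A b x -> Uset l h x !=set0) ->
  let X := Xset A b in
  let f1 := two_stage_obj c1 c2 (Uset l h) (Yset B1 B2 E d) in
  let f2 := two_stage_obj c1 c2 (fun _ => @U0 R nu)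
     (fun x u => Yset B1 B2 E d x
        (subvec l x + cprod u (subvec h x - subvec l x))) in
  optval X f1 = optval X f2 /\
  (forall x, is_optimal X f1 x <-> is_optimal X f2 x).
Proof.
move=> U_neq0 X f1 f2.
have f12 x : X x -> f1 x = f2 x.
  move=> Xx; have [[_ x_ge0] _] := Xx.
  rewrite /f1 /f2 /two_stage_obj -(box_param_image x_ge0 (U_neq0 x Xx)).
  by rewrite image_comp /box_param.
by split; [exact: eq_optval f12 | exact: eq_is_optimal f12].
Qed.
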